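(* Let $q$ be a prime power, $r\geq1$, $\delta\geq2$ integers and $R=r+\delta-1$. Let $a_1,\dots,a_\ell\in\mathbb{F}_q^*$ and $h=\prod_{i=1}^{\ell}(T^R-a_i)$. Let $P\in\mathbb{F}_q[T]$ be monic irreducible of degree $m$ with $P\equiv1\pmod h$, let $\alpha\in\mathbb{F}_{q^m}$ be a root of $P$, and let $\bar\phi:\mathbb{F}_q[T]\to\mathbb{F}_{q^m}\{\tau\}$ be the Drinfeld module with $\bar\phi_T=\alpha+\tau$ (the reduction modulo $P$ of the Carlitz module $\phi_T=T+\tau$). Then for every $i\in\{1,\ldots,\ell\}$, $\dim_{\mathbb{F}_q}\bar\phi[T^R-a_i]=R$.
   Context: For a field $K\supseteq\mathbb{F}_q$, $K\{\tau\}$ is the twisted polynomial ring with $(a\tau^i)(b\tau^j)=ab^{q^i}\tau^{i+j}$, and a Drinfeld module $\bar\phi$ is an $\mathbb{F}_q$-algebra homomorphism $\mathbb{F}_q[T]\to K\{\tau\}$ determined by $\bar\phi_T$. For $a\in\mathbb{F}_q[T]$, $\bar\phi_a(x)$ is the $q$-linearized polynomial obtained from $\bar\phi_a$ by replacing $\tau^i$ with $x^{q^i}$, and $\bar\phi[a]=\{\beta\in\overline{\mathbb{F}}_{q}:\bar\phi_a(\beta)=0\}$ is the set of $a$-torsion points, an $\mathbb{F}_q$-vector space. *)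

From HB Require Import structures.
From mathcomp Require Import all_boot all_order all_algebra.
Set Implicit Arguments. Unset Strict Implicit. Unset Printing Implicit Defensive.
Import GRing.Theory.
Local Open Scope ring_scope.

Section Drinfeld.
Variables (F : finFieldType) (L : fieldType) (iota : {rmorphism F -> L}).

Definition phiT (alpha : L) (x : L) : L := alpha * x + x ^+ #|F|.

(* phibar_a(x) for a = sum_i c_i T^i in F_q[T]: the F_q-algebra homomorphism
   T |-> alpha + tau, i.e. phibar_a = sum_i c_i (phibar_T)^i (powers in the
   twisted polynomial ring = composition of linearized polynomials), with
   tau^i replaced by x^(q^i). *)
Definition phi_eval (alpha : L) (a : {poly F}) (x : L) : L :=
  \sum_(i < size a) iota a`_i * iter i (phiT alpha) x.

Definition torsion (alpha : L) (a : {poly F}) (beta : L) : Prop :=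
  phi_eval alpha a beta = 0.

Definition has_Fq_dim (S : L -> Prop) (n : nat) : Prop :=
  exists b : 'I_n -> L,
    (forall c : 'I_n -> F, \sum_(i < n) iota (c i) * b i = 0 -> forall i, c i = 0)
    /\ (forall beta, S beta <-> exists c : 'I_n -> F, beta = \sum_(i < n) iota (c i) * b i).
End Drinfeld.

(* For a = T^n - c the linearized polynomial phibar_a(X) = phibar_T^n(X) - cX has
   degree q^n and constant derivative alpha^n - c.  Since T^R - x divides P - 1
   and P(alpha) = 0, alpha^R <> x, so it is separable: its q^R roots in the
   algebraically closed field are distinct and form an F_q-subspace, which
   therefore has dimension R. *)

From HB Require Import structures.
From mathcomp Require Import all_boot all_order all_algebra all_field all_solvable.
Import GRing.Theory.
Set Implicit Arguments. Unset Strict Implicit. Unset Printing Implicit Defensive.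
Local Open Scope ring_scope.

Section LinearCombinations.
Variables (F : finFieldType) (L : fieldType) (iota : {rmorphism F -> L}).

Definition lincomb k (c : 'I_k -> F) (b : nat -> L) : L :=
  \sum_(i < k) iota (c i) * b i.

Definition free_family k (b : nat -> L) : Prop :=
  forall c : 'I_k -> F, lincomb c b = 0 -> forall i, c i = 0.

Definition span_seq k (b : nat -> L) : seq L :=
  [seq lincomb c b | c : {ffun 'I_k -> F}].

Lemma size_span_seq k b : size (span_seq k b) = (#|F| ^ k)%N.
Proof. by rewrite size_image card_ffun card_ord. Qed.

Lemma span_seqP k b v : v \in span_seq k b <-> exists c : 'I_k -> F, v = lincomb c b.
Proof.
split=> [/imageP [c _ ->] | [c ->]]; first by exists c.
apply/imageP; exists (finfun c) => //.
by apply: eq_bigr => i _; rewrite ffunE.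
Qed.

Lemma lincombB k (c d : 'I_k -> F) b :
  lincomb (fun i => c i - d i) b = lincomb c b - lincomb d b.
Proof.
by rewrite /lincomb -sumrB; apply: eq_bigr => i _; rewrite rmorphB mulrBl.
Qed.

Lemma uniq_span_seq k b : free_family k b -> uniq (span_seq k b).
Proof.
move=> free_b; rewrite map_inj_uniq ?enum_uniq // => c d /eqP eq_cd.
apply/ffunP => i; apply/eqP; rewrite -subr_eq0; apply/eqP; move: i.
by apply: free_b; rewrite lincombB; apply/eqP; rewrite subr_eq0.
Qed.

Lemma free_family_extend k b v : free_family k b -> v \notin span_seq k b ->
  free_family k.+1 (fun n => if n == k then v else b n).
Proof.
move=> free_b v_span c.
rewrite /lincomb big_ord_recr /= eqxx.
under eq_bigr => i _ do rewrite /= ltn_eqF //.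
rewrite -/(lincomb (fun i => c (widen_ord (leqnSn k) i)) b).
move=> /eqP; rewrite addr_eq0 => /eqP comb_c.
have c_max : c ord_max = 0.
  apply: contraNeq v_span => cmax_neq0; apply/span_seqP.
  exists (fun i => - ((c ord_max)^-1 * c (widen_ord (leqnSn k) i))).
  rewrite /lincomb.
  under eq_bigr => i _ do rewrite rmorphN rmorphM mulNr -mulrA.
  rewrite sumrN -mulr_sumr -/(lincomb _ b) comb_c mulrN opprK mulrA -rmorphM.
  by rewrite mulVf // rmorph1 mul1r.
move: comb_c; rewrite c_max rmorph0 mul0r oppr0 => /free_b c_widen i.
have [i_lt_k | ] := ltnP i k.
  by have := c_widen (Ordinal i_lt_k); congr (c _ = 0); apply: val_inj.
rewrite -ltnS => k_lt_i; suff -> : i = ord_max by [].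
by apply: val_inj; apply/eqP; rewrite eqn_leq -ltnS ltn_ord.
Qed.

Section FiniteSubspace.
Variables (S : seq L) (N : nat).
Hypotheses (S_uniq : uniq S) (size_S : size S = (#|F| ^ N)%N).
Hypotheses (S0 : 0 \in S) (SD : forall u v, u \in S -> v \in S -> u + v \in S).
Hypothesis SZ : forall (c : F) v, v \in S -> iota c * v \in S.

Lemma lincomb_mem k (c : 'I_k -> F) b : (forall i, (i < k)%N -> b i \in S) ->
  lincomb c b \in S.
Proof.
move=> bS; apply: (big_ind (fun x => x \in S)) => // i _.
exact/SZ/bS.
Qed.

Lemma free_family_mem k : (k <= N)%N ->
  exists2 b, free_family k b & forall i, (i < k)%N -> b i \in S.
Proof.
elim: k => [_ | k IHk lt_k_N].
  by exists (fun=> 0) => // c _ [].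
have [b free_b bS] := IHk (ltnW lt_k_N).
have : ~~ all (mem (span_seq k b)) S.
  apply/negP => /allP S_span; have := uniq_leq_size S_uniq S_span.
  by rewrite size_S size_span_seq leq_exp2l ?finNzRing_gt1 // leqNgt lt_k_N.
case/allPn => v vS v_span; exists (fun n => if n == k then v else b n).
  exact: free_family_extend.
by move=> i; rewrite ltnS leq_eqVlt; case: eqP => //= _; apply: bS.
Qed.

Lemma has_Fq_dim_seq : has_Fq_dim iota (fun v => v \in S) N.
Proof.
have [b free_b bS] := free_family_mem (leqnn N).
have span_sub : {subset span_seq N b <= S}.
  by move=> v /span_seqP [c ->]; apply: lincomb_mem.
have [|_ span_eq] := uniq_min_size (uniq_span_seq free_b) span_sub.
  by rewrite size_S size_span_seq.
exists (fun i : 'I_N => b i); split=> [c /free_b // | v].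
by rewrite /= -span_eq; apply: span_seqP.
Qed.

End FiniteSubspace.
End LinearCombinations.

Section Frobenius.
Variables (F : finFieldType) (L : fieldType) (iota : {rmorphism F -> L}).

Lemma card_finField_pchar_pow :
  exists2 p, p \in [pchar L] & exists k, #|F| = (p ^ k.+1)%N.
Proof.
have [p _ chFp] := finPcharP F; exists p; first exact: rmorph_pchar chFp.
have /abelem_pgroup := fin_ring_pchar_abelem chFp.
rewrite pgroupE cardsT => /p_natP [[|k] cardF]; last by exists k.
by have := finNzRing_gt1 F; rewrite cardF.
Qed.

Lemma card_finField_pchar0 : (#|F|%:R : L) = 0.
Proof.
have [p chLp [k ->]] := card_finField_pchar_pow.
by rewrite expnS natrM (pcharf0 chLp) mul0r.
Qed.

Lemma frobenius_cardD (x y : L) : (x + y) ^+ #|F| = x ^+ #|F| + y ^+ #|F|.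
Proof.
have [p chLp [k ->]] := card_finField_pchar_pow.
by rewrite exprDn_pchar // (eq_pnat _ (pcharf_eq chLp)) pnatX pnat_id ?(pcharf_prime chLp).
Qed.

Lemma frobenius_cardZ (c : F) (x : L) : (iota c * x) ^+ #|F| = iota c * x ^+ #|F|.
Proof. by rewrite exprMn -rmorphXn expf_card. Qed.

End Frobenius.

Section LinearizedPolynomials.
Variables (F : finFieldType) (L : fieldType) (iota : {rmorphism F -> L}) (alpha : L).
Local Notation phiTn n := (iter n (phiT F alpha)).

Lemma phiTnD n : {morph phiTn n : x y / x + y}.
Proof.
move=> x y; elim: n => //= n ->.
by rewrite /phiT (frobenius_cardD iota) mulrDr addrACA.
Qed.

Lemma phiTnZ n (c : F) x : phiTn n (iota c * x) = iota c * phiTn n x.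
Proof. by elim: n => //= n ->; rewrite /phiT frobenius_cardZ mulrDr mulrCA. Qed.

Lemma phi_evalD a : {morph phi_eval iota alpha a : x y / x + y}.
Proof.
move=> x y; rewrite /phi_eval -big_split; apply: eq_bigr => i _.
by rewrite phiTnD mulrDr.
Qed.

Lemma phi_evalZ a (c : F) x :
  phi_eval iota alpha a (iota c * x) = iota c * phi_eval iota alpha a x.
Proof.
rewrite /phi_eval mulr_sumr; apply: eq_bigr => i _.
by rewrite phiTnZ mulrCA.
Qed.

Lemma phi_eval0 a : phi_eval iota alpha a 0 = 0.
Proof. by have := phi_evalZ a 0 0; rewrite rmorph0 !mul0r. Qed.

Lemma phi_eval_XnsubC n (c : F) x : (0 < n)%N ->
  phi_eval iota alpha ('X^n - c%:P) x = phiTn n x - iota c * x.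
Proof.
case: n => // n _; rewrite /phi_eval size_XnsubC // big_ord_recr big_ord_recl /=.
rewrite big1 => [|i _]; last first.
  by rewrite coefB coefXn coefC /bump /= add1n eqSS ltn_eqF // subrr rmorph0 mul0r.
rewrite !coefB !coefXn !coefC /= eqxx sub0r subr0 rmorphN rmorph1 mul1r mulNr.
by rewrite addr0 addrC.
Qed.

Definition phiT_poly (p : {poly L}) : {poly L} := alpha *: p + p ^+ #|F|.
Definition phiTn_poly n : {poly L} := iter n phiT_poly 'X.

Lemma horner_phiTn_poly n x : (phiTn_poly n).[x] = phiTn n x.
Proof.
elim: n => [|n IHn] /=; first by rewrite hornerX.
by rewrite hornerD hornerZ horner_exp IHn.
Qed.

Lemma deriv_phiTn_poly n : (phiTn_poly n)^`() = (alpha ^+ n)%:P.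
Proof.
elim: n => [|n IHn] /=; first by rewrite derivX.
rewrite derivD derivZ deriv_exp IHn -mulr_natr -polyC_natr (card_finField_pchar0 iota).
by rewrite mulr0 addr0 -mul_polyC -polyCM exprS.
Qed.

Lemma phiTn_poly_monic_size n :
  phiTn_poly n \is monic /\ size (phiTn_poly n) = (#|F| ^ n).+1.
Proof.
have q_gt1 := finNzRing_gt1 F.
elim: n => [|n [IHm IHs]] /=; first by rewrite monicX size_polyX.
have powm : phiTn_poly n ^+ #|F| \is monic by apply: monic_exp.
have pows : size (phiTn_poly n ^+ #|F|) = (#|F| ^ n.+1).+1.
  by rewrite (polySpred (monic_neq0 powm)) size_exp IHs expnSr.
have lt_size : (size (alpha *: phiTn_poly n) < size (phiTn_poly n ^+ #|F|))%N.
  rewrite (leq_ltn_trans (size_scale_leq _ _)) // IHs pows ltnS expnS.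
  by rewrite ltn_Pmull // expn_gt0 ltnW.
rewrite monicE lead_coefDr // -monicE; split=> //.
by rewrite /phiT_poly addrC size_polyDl.
Qed.

Definition torsion_poly n (c : F) : {poly L} := phiTn_poly n - iota c *: 'X.

Section PositiveDegree.
Variables (n : nat) (c : F).
Hypothesis n_gt0 : (0 < n)%N.

Lemma horner_torsion_poly x :
  (torsion_poly n c).[x] = phi_eval iota alpha ('X^n - c%:P) x.
Proof.
by rewrite phi_eval_XnsubC // hornerD hornerN hornerZ hornerX horner_phiTn_poly.
Qed.

Lemma torsion_poly_monic_size :
  torsion_poly n c \is monic /\ size (torsion_poly n c) = (#|F| ^ n).+1.
Proof.
have [mon sz] := phiTn_poly_monic_size n.
have lt_size : (size (- (iota c *: 'X)) < size (phiTn_poly n))%N.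
  rewrite size_polyN (leq_ltn_trans (size_scale_leq _ _)) // size_polyX sz ltnS.
  by rewrite -[X in (X < _)%N](expn0 #|F|) ltn_exp2l ?finNzRing_gt1.
by rewrite monicE lead_coefDl // -monicE size_polyDl.
Qed.

Lemma separable_torsion_poly :
  alpha ^+ n != iota c -> separable_poly (torsion_poly n c).
Proof.
move=> alpha_n; rewrite unlock /separable_poly derivB derivZ derivX deriv_phiTn_poly.
by rewrite alg_polyC -polyCB -alg_polyC coprimepZr ?coprimep1 ?subr_eq0.
Qed.

End PositiveDegree.
End LinearizedPolynomials.

Lemma root_map_dvdp_subr1 (F L : fieldType) (iota : {rmorphism F -> L})
    (d p : {poly F}) z :
  d %| p - 1 -> root (map_poly iota p) z -> ~~ root (map_poly iota d) z.
Proof.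
move=> /dvdpP [k k_d] /rootP p_z; apply/rootP => d_z.
have := congr1 (fun q => (map_poly iota q).[z]) k_d.
rewrite /= rmorphB rmorph1 rmorphM !hornerE p_z d_z mulr0 sub0r => /eqP.
by rewrite oppr_eq0 oner_eq0.
Qed.

Lemma monic_separable_poly_roots (L : closedFieldType) (p : {poly L}) :
  p \is monic -> separable_poly p ->
  exists2 S, uniq S & p = \prod_(z <- S) ('X - z%:P).
Proof.
move=> /monicP lead_p sep_p; have [S def_p] := closed_field_poly_normal p.
rewrite lead_p scale1r in def_p; exists S => //.
by rewrite -separable_prod_XsubC -def_p.
Qed.

Lemma has_Fq_dim_torsion_XnsubC (F : finFieldType) (L : closedFieldType)
    (iota : {rmorphism F -> L}) (alpha : L) n (c : F) :
  (0 < n)%N -> alpha ^+ n != iota c ->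
  has_Fq_dim iota (torsion iota alpha ('X^n - c%:P)) n.
Proof.
move=> n_gt0 alpha_n.
have [mon sz] := torsion_poly_monic_size iota alpha c n_gt0.
have [S S_uniq def_p] :=
  monic_separable_poly_roots mon (separable_torsion_poly alpha_n).
have memS x : (x \in S) = (phi_eval iota alpha ('X^n - c%:P) x == 0).
  by rewrite -root_prod_XsubC -def_p rootE horner_torsion_poly.
have [||||b [free_b span_b]] := @has_Fq_dim_seq F L iota S n S_uniq.
- by apply: succn_inj; rewrite -sz def_p size_prod_XsubC.
- by rewrite memS phi_eval0.
- by move=> u v; rewrite !memS phi_evalD => /eqP-> /eqP->; rewrite addr0.
- by move=> a v; rewrite !memS phi_evalZ => /eqP->; rewrite mulr0.
exists b; split=> // x; apply: iff_trans (span_b x).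
by rewrite memS; split=> /eqP.
Qed.

Theorem lemma3p2 (F : finFieldType) (L : closedFieldType)
  (iota : {rmorphism F -> L}) (r delta : nat) (a : seq F)
  (P : {poly F}) (alpha : L) :
  (1 <= r)%N -> (2 <= delta)%N ->
  let R := (r + delta - 1)%N in
  (forall x, x \in a -> x != 0) ->
  let h := \prod_(x <- a) ('X^R - x%:P) in
  P \is monic -> irreducible_poly P ->
  h %| (P - 1) ->
  root (map_poly iota P) alpha ->
  forall x, x \in a ->
    has_Fq_dim iota (torsion iota alpha ('X^R - x%:P)) R.
Proof.
move=> r_gt0 delta_ge2 R _ h _ _ h_dvd P_alpha x xa.
have R_gt0 : (0 < R)%N by rewrite subn_gt0 (leq_trans delta_ge2) ?leq_addl.
apply: has_Fq_dim_torsion_XnsubC => //.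
have factor_dvd : 'X^R - x%:P %| P - 1.
  by apply: dvdp_trans h_dvd; rewrite /h (big_rem x xa) dvdp_mulr.
have := root_map_dvdp_subr1 factor_dvd P_alpha.
by rewrite rmorphB /= map_polyXn map_polyC rootE !hornerE subr_eq0.
Qed.
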